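(* Let $\mathcal{M}$ be a circular embedding of a connected graph $X$ with $n$ vertices and $s$ faces on a closed orientable surface. Let $U$ be its vertex-face transition matrix, $C$ its vertex-face incidence matrix, and $\widehat C=\widehat N^T\widehat M$ its normalized vertex-face incidence matrix. Then the $(-1)$-eigenspace of $U$ is \[\widehat M\ker(\widehat C)\oplus\widehat N\ker(\widehat C^T),\] and it has dimension $n+s-2\operatorname{rk}(C)$.
   Context: Setting. A circular embedding is a cellular embedding in which every face is bounded by a cycle. Arcs are ordered pairs $(u,v)$ with $\{u,v\}$ an edge, and $u$ is the tail. Consistent orientation. Fix an orientation of the face boundaries such that each edge shared by two faces receives opposite directions in them. Then every arc lies in exactly one facial walk. Matrices. - $M$ is the arc-face incidence matrix ($M_{(a,b),f}=1$ iff $(a,b)$ lies in the facial walk of $f$). - $N$ is the arc-tail incidence matrix ($N_{(a,b),u}=1$ iff $a=u$). - $\widehat M,\widehat N$ are these matrices with columns scaled to unit length. - $U=(2\widehat M\widehat M^T-I)(2\widehat N\widehat N^T-I)$ is the vertex-face transition matrix. - $C$ is the $n\times s$ matrix with $C_{u,f}=1$ iff $u$ lies on face $f$; equivalently $C=N^TM$. *)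

From HB Require Import structures.
From mathcomp Require Import all_boot all_order all_algebra all_fingroup.
Set Implicit Arguments. Unset Strict Implicit. Unset Printing Implicit Defensive.
Import Order.TTheory GRing.Theory Num.Theory.
Local Open Scope ring_scope.

(* Combinatorial model of a cellular embedding of a simple graph on a closed
   orientable surface (Heffter--Edmonds rotation systems).  Arcs: 'I_m; arc a is the ordered pair (tl a, hd a), and
   the arcs are exactly the ordered pairs (u,v) with {u,v} an edge.
   rev a is the reverse arc.  rho is the rotation (a permutation of the arcs
   preserving tails and cyclically permuting the arcs with a given tail).
   The (consistently oriented) facial walks are the orbits of the face
   permutation phi a = rho (rev a) (note tl (phi a) = hd a); the faces are
   labelled by 'I_s through the map face. *)

Definition face_perm m (rev : 'I_m -> 'I_m) (rho : {perm 'I_m}) : 'I_m -> 'I_m :=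
  fun a => rho (rev a).

Definition simple_graph n (adj : rel 'I_n) : Prop :=
  (forall u, ~~ adj u u) /\ (forall u v, adj u v = adj v u).

Definition connected_graph n (adj : rel 'I_n) : Prop :=
  forall u v, connect adj u v.

Definition arc_structure n m (adj : rel 'I_n) (tl hd : 'I_m -> 'I_n)
    (rev : 'I_m -> 'I_m) : Prop :=
  [/\ forall a b, tl a = tl b -> hd a = hd b -> a = b,
      forall u v, adj u v <-> exists a, tl a = u /\ hd a = v
    & forall a, tl (rev a) = hd a /\ hd (rev a) = tl a].

Definition rotation_system n m (tl : 'I_m -> 'I_n) (rho : {perm 'I_m}) : Prop :=
  (forall a, tl (rho a) = tl a) /\
  (forall a b, tl a = tl b -> fconnect rho a b).

Definition face_labelling m s (phi : 'I_m -> 'I_m) (face : 'I_m -> 'I_s)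
  : Prop :=
  (forall a b, face a = face b <-> fconnect phi a b) /\
  (forall f, exists a, face a = f).

(* Orientable cellular embedding of the connected simple graph adj with
   n vertices, m arcs and s faces. The graph has at least one edge (the
   one-vertex graph has no circular embedding). *)
Definition orientable_embedding n m s (adj : rel 'I_n) (tl hd : 'I_m -> 'I_n)
    (rev : 'I_m -> 'I_m) (rho : {perm 'I_m}) (face : 'I_m -> 'I_s) : Prop :=
  [/\ simple_graph adj /\ connected_graph adj, (0 < m)%N,
      arc_structure adj tl hd rev, rotation_system tl rho
    & face_labelling (face_perm rev rho) face].

(* circular: every facial walk is a cycle, i.e. it has length >= 3 and
   visits each vertex at most once *)
Definition circular m s n (tl : 'I_m -> 'I_n) (face : 'I_m -> 'I_s) : Prop :=
  (forall a b, face a = face b -> tl a = tl b -> a = b) /\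
  (forall f, (3 <= #|[set a | face a == f]|)%N).

Definition arc_face_mx (R : nzRingType) m s (face : 'I_m -> 'I_s)
  : 'M[R]_(m, s) := \matrix_(a, f) (face a == f)%:R.

Definition arc_tail_mx (R : nzRingType) m n (tl : 'I_m -> 'I_n)
  : 'M[R]_(m, n) := \matrix_(a, u) (tl a == u)%:R.

Definition normalize_cols (R : rcfType) p q (A : 'M[R]_(p, q)) : 'M[R]_(p, q) :=
  \matrix_(i, j) (A i j / Num.sqrt (\sum_k A k j ^+ 2)).

Definition transition_mx (R : rcfType) m s n (Mh : 'M[R]_(m, s))
    (Nh : 'M[R]_(m, n)) : 'M[R]_m :=
  (2%:R *: (Mh *m Mh^T) - 1%:M) *m (2%:R *: (Nh *m Nh^T) - 1%:M).

(* Write P = Mh Mh^T and Q = Nh Nh^T.  Once Mh and Nh have orthonormal columns,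
   P and Q are orthogonal projections and U = (2P - 1)(2Q - 1) is a product of
   two reflections.  Multiplying U x = -x by the involution 2P - 1 gives
   (2Q - 1) x = -(2P - 1) x, i.e. x = P x + Q x; then
   Nh^T (P x) = Nh^T (x - Q x) = 0, so P x lies in Mh ker(Ch), and
   symmetrically Q x lies in Nh ker(Ch^T).
   Conversely each of these spaces is fixed by one reflection and negated by the
   other, and P is the identity on the first and zero on the second, so the sum
   is direct.  As Mh and Nh are isometries its dimension is
   (s - rk Ch) + (n - rk Ch), and rk Ch = rk C because Ch is C rescaled by
   invertible diagonal matrices.
   Orthonormality holds because each arc lies in one face and has one tail (the
   columns of M and N are orthogonal) and every face and every vertex carries
   an arc (no column is zero); the latter uses connectivity and m > 0. *)

From HB Require Import structures.
From mathcomp Require Import all_boot all_order all_algebra all_fingroup.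
From mathcomp Require Import zify.
Set Implicit Arguments. Unset Strict Implicit. Unset Printing Implicit Defensive.
Import Order.TTheory GRing.Theory Num.Theory.
Local Open Scope ring_scope.

Definition reflection_mx (R : comNzRingType) m p (A : 'M[R]_(m, p)) : 'M[R]_m :=
  2%:R *: (A *m A^T) - 1%:M.

Section Reflections.
Variables (R : comNzRingType) (m p : nat) (A : 'M[R]_(m, p)).

Lemma mulmx_reflection k (Y : 'M[R]_(k, m)) :
  Y *m reflection_mx A = 2%:R *: (Y *m A *m A^T) - Y.
Proof. by rewrite mulmxBr -scalemxAr mulmx1 mulmxA. Qed.

Lemma trmx_reflection : (reflection_mx A)^T = reflection_mx A.
Proof. by rewrite /reflection_mx linearB linearZ /= trmx_mul trmxK trmx1. Qed.

Lemma mulmx_reflection_orth k (Y : 'M[R]_(k, m)) :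
  Y *m A = 0 -> Y *m reflection_mx A = - Y.
Proof. by move=> YA0; rewrite mulmx_reflection YA0 mul0mx scaler0 sub0r. Qed.

Lemma mulmx_reflection_fix k (Y : 'M[R]_(k, m)) :
  Y *m A *m A^T = Y -> Y *m reflection_mx A = Y.
Proof. by move=> YP; rewrite mulmx_reflection YP scaler_nat mulr2n addrK. Qed.

Hypothesis orthoA : A^T *m A = 1%:M.

Lemma reflection_mx_fix_cols : reflection_mx A *m A = A.
Proof.
rewrite mulmxBl -scalemxAl -mulmxA orthoA mulmx1 mul1mx.
by rewrite scaler_nat mulr2n addrK.
Qed.

Lemma reflection_mxK : reflection_mx A *m reflection_mx A = 1%:M.
Proof.
rewrite mulmx_reflection reflection_mx_fix_cols /reflection_mx.
by rewrite opprB addrC subrK.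
Qed.

End Reflections.

Section ReflectionProduct.
Variables (R : numFieldType) (m s n : nat).
Variables (Mh : 'M[R]_(m, s)) (Nh : 'M[R]_(m, n)).
Hypotheses (orthoM : Mh^T *m Mh = 1%:M) (orthoN : Nh^T *m Nh = 1%:M).

Let U := reflection_mx Mh *m reflection_mx Nh.
Let Ch := Nh^T *m Mh.
Let E := eigenspace U^T (-1).
Let K1 := kermx Ch^T *m Mh^T.
Let K2 := kermx Ch *m Nh^T.

Lemma trmx_reflection_mul : U^T = reflection_mx Nh *m reflection_mx Mh.
Proof. by rewrite trmx_mul !trmx_reflection. Qed.

Lemma kerChT_mulmx_Nh : K1 *m Nh = 0.
Proof. by rewrite -mulmxA /Ch trmx_mul trmxK mulmx_ker. Qed.

Lemma kerChT_proj : K1 *m Mh *m Mh^T = K1.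
Proof. by rewrite -(mulmxA K1) -mulmxA (mulmxA Mh^T) orthoM mul1mx. Qed.

Lemma kerCh_mulmx_Mh : K2 *m Mh = 0.
Proof. by rewrite -mulmxA mulmx_ker. Qed.

Lemma kerCh_proj : K2 *m Nh *m Nh^T = K2.
Proof. by rewrite -(mulmxA K2) -mulmxA (mulmxA Nh^T) orthoN mul1mx. Qed.

Lemma kerChT_sub_eigenspace : (K1 <= E)%MS.
Proof.
apply/eigenspaceP; rewrite trmx_reflection_mul mulmxA.
rewrite (mulmx_reflection_orth kerChT_mulmx_Nh) mulNmx.
by rewrite (mulmx_reflection_fix kerChT_proj) scaleN1r.
Qed.

Lemma kerCh_sub_eigenspace : (K2 <= E)%MS.
Proof.
apply/eigenspaceP; rewrite trmx_reflection_mul mulmxA.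
rewrite (mulmx_reflection_fix kerCh_proj).
by rewrite (mulmx_reflection_orth kerCh_mulmx_Mh) scaleN1r.
Qed.

Lemma eigenspace_N1_split k (x : 'M[R]_(k, m)) : x *m U^T = - x ->
  x *m Mh *m Mh^T + x *m Nh *m Nh^T = x.
Proof.
rewrite trmx_reflection_mul => xU.
have xRN : x *m reflection_mx Nh = - (x *m reflection_mx Mh).
  rewrite -[LHS]mulmx1 -(reflection_mxK orthoM) !mulmxA -(mulmxA x).
  by rewrite xU mulNmx.
move: xRN; rewrite !mulmx_reflection opprB => /(canRL (subrK x)) xQ.
apply: (@scalerI _ _ 2%:R); first by rewrite pnatr_eq0.
by rewrite scalerDr xQ addrA [_ + (x - _)]addrC subrK scaler_nat mulr2n.
Qed.

Lemma eigenspace_sub_kers : (E <= K1 + K2)%MS.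
Proof.
have /eigenspaceP EU := submx_refl E.
have splitE : E *m Mh *m Mh^T + E *m Nh *m Nh^T = E.
  by apply: eigenspace_N1_split; rewrite EU scaleN1r.
rewrite -{1}splitE; apply: addmx_sub_adds; apply: submxMr; apply/sub_kermxP.
  rewrite /Ch trmx_mul trmxK mulmxA (canRL (addrK _) splitE) mulmxBl.
  by rewrite -!mulmxA orthoN mulmx1 subrr.
rewrite mulmxA (canRL (addKr _) splitE) mulmxDl mulNmx.
by rewrite -!mulmxA orthoM mulmx1 addNr.
Qed.

Lemma kers_direct : mxdirect (K1 + K2).
Proof.
apply/mxdirect_addsP.
have [D1 XK1] := submxP (capmxSl K1 K2).
have [D2 XK2] := submxP (capmxSr K1 K2).
set X := (K1 :&: K2)%MS in XK1 XK2 *.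
have XP : X *m Mh *m Mh^T = X by rewrite XK1 -2!mulmxA (mulmxA K1) kerChT_proj.
have XMh : X *m Mh = 0 by rewrite XK2 -mulmxA kerCh_mulmx_Mh mulmx0.
by rewrite -XP XMh mul0mx.
Qed.

Lemma kers_sum_eigenspace : (K1 + K2 == E)%MS.
Proof.
rewrite /eqmx addsmx_sub kerChT_sub_eigenspace kerCh_sub_eigenspace.
exact: eigenspace_sub_kers.
Qed.

Lemma mxrank_eigenspace_N1 : \rank E = (n + s - 2 * \rank Ch)%N.
Proof.
move/eqmxP: kers_sum_eigenspace => <-.
have freeMT : row_free Mh^T by apply/row_freeP; exists Mh.
have freeNT : row_free Nh^T by apply/row_freeP; exists Nh.
rewrite (mxrank_disjoint_sum (mxdirect_addsP kers_direct)).
rewrite (mxrankMfree _ freeMT) (mxrankMfree _ freeNT).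
rewrite !mxrank_ker mxrank_tr.
have := rank_leq_row Ch; have := rank_leq_col Ch; lia.
Qed.

End ReflectionProduct.

Section NormalizedColumns.
Variables (R : rcfType) (p : nat).

Definition col_sqnorm q (A : 'M[R]_(p, q)) j := \sum_i A i j ^+ 2.

Definition col_normalizer q (A : 'M[R]_(p, q)) : 'M[R]_q :=
  diag_mx (\row_j (Num.sqrt (col_sqnorm A j))^-1).

Lemma normalize_colsE q (A : 'M[R]_(p, q)) :
  normalize_cols A = A *m col_normalizer A.
Proof. by apply/matrixP => i j; rewrite mul_mx_diag !mxE. Qed.

Lemma col_normalizer_unit q (A : 'M[R]_(p, q)) :
  (forall j, 0 < col_sqnorm A j) -> col_normalizer A \in unitmx.
Proof.
move=> Apos; rewrite unitmxE det_diag unitfE; apply/prodf_neq0 => j _.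
by rewrite mxE invr_eq0 sqrtr_eq0 -ltNge.
Qed.

Lemma normalize_cols_orthonormal q (A : 'M[R]_(p, q)) :
  is_diag_mx (A^T *m A) -> (forall j, 0 < col_sqnorm A j) ->
  (normalize_cols A)^T *m normalize_cols A = 1%:M.
Proof.
move=> /is_diag_mxP Adiag Apos.
have gram : A^T *m A = diag_mx (\row_j col_sqnorm A j).
  apply/matrixP => i j; have [<-|ij] := eqVneq i j; last first.
    by rewrite Adiag // mxE (negPf ij) mulr0n.
  by rewrite !mxE eqxx mulr1n; apply: eq_bigr => k _; rewrite mxE expr2.
rewrite normalize_colsE trmx_mul /col_normalizer tr_diag_mx.
rewrite mulmxA -(mulmxA _ A^T) gram.
rewrite !mulmx_diag -diag_const_mx; congr diag_mx.
apply/rowP => j; rewrite !mxE.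
have sqrt_neq0 : Num.sqrt (col_sqnorm A j) != 0 by rewrite sqrtr_eq0 -ltNge.
by rewrite -[X in _ * X * _](sqr_sqrtr (ltW (Apos j))) expr2 mulKf // mulfV.
Qed.

Lemma mxrank_normalize_cols_mul q r (A : 'M[R]_(p, q)) (B : 'M[R]_(p, r)) :
  (forall j, 0 < col_sqnorm A j) -> (forall j, 0 < col_sqnorm B j) ->
  \rank ((normalize_cols A)^T *m normalize_cols B) = \rank (A^T *m B).
Proof.
move=> Apos Bpos; rewrite !normalize_colsE trmx_mul /col_normalizer tr_diag_mx.
rewrite mulmxA mxrankMfree; last by rewrite row_free_unit col_normalizer_unit.
by rewrite -mulmxA eqmxMfull // row_full_unit col_normalizer_unit.
Qed.

End NormalizedColumns.

Section IncidenceMatrix.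
Variables (R : rcfType) (m k : nat) (g : 'I_m -> 'I_k).

Let A : 'M[R]_(m, k) := \matrix_(a, j) (g a == j)%:R.

Lemma incidence_gram_diag : is_diag_mx (A^T *m A).
Proof.
apply/is_diag_mxP => i j; rewrite val_eqE => ij; rewrite !mxE big1 // => a _.
rewrite !mxE -natrM mulnb.
by case: (eqVneq (g a) i) => [->|_] //=; rewrite (negPf ij).
Qed.

Lemma incidence_col_sqnorm_gt0 j : (exists a, g a = j) -> 0 < col_sqnorm A j.
Proof.
case=> a <-; rewrite /col_sqnorm (bigD1 a) //= mxE eqxx expr1n.
by rewrite ltr_wpDr ?ltr01 // sumr_ge0 // => i _; rewrite sqr_ge0.
Qed.

End IncidenceMatrix.

Lemma connected_tails_surjective n m (adj : rel 'I_n) (tl : 'I_m -> 'I_n) :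
  connected_graph adj -> (0 < m)%N ->
  (forall u v, adj u v -> exists a, tl a = u) -> forall u, exists a, tl a = u.
Proof.
move=> connected m_gt0 adj_tl u; pose a0 := Ordinal m_gt0.
have [->|u_neq] := eqVneq u (tl a0); first by exists a0.
have /connectP[[|v p] /= walk last_p] := connected u (tl a0).
  by rewrite -last_p eqxx in u_neq.
by case/andP: walk => /adj_tl.
Qed.

Theorem theorem3p3 (R : rcfType) (n m s : nat) (adj : rel 'I_n)
    (tl hd : 'I_m -> 'I_n) (rev : 'I_m -> 'I_m) (rho : {perm 'I_m})
    (face : 'I_m -> 'I_s) :
  orientable_embedding adj tl hd rev rho face ->
  circular tl face ->
  let M : 'M[R]_(m, s) := arc_face_mx R face in
  let N : 'M[R]_(m, n) := arc_tail_mx R tl in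
  let Mh := normalize_cols M in
  let Nh := normalize_cols N in
  let U := transition_mx Mh Nh in
  let C := N^T *m M in
  let Ch := Nh^T *m Mh in
  let E := eigenspace U^T (-1) in
  let K1 := kermx Ch^T *m Mh^T in
  let K2 := kermx Ch *m Nh^T in
  [/\ (K1 + K2 == E)%MS, mxdirect (K1 + K2)
    & \rank E = (n + s - 2 * \rank C)%N].
Proof.
move=> [[_ connected] m_gt0 [_ arcs _] _ [_ face_surj]] _.
move=> M N Mh Nh U C Ch E K1 K2.
have tl_surj : forall u, exists a, tl a = u.
  apply: connected_tails_surjective connected m_gt0 _ => u v /arcs[a [tla _]].
  by exists a.
have Mpos j : 0 < col_sqnorm M j := incidence_col_sqnorm_gt0 _ (face_surj j).
have Npos u : 0 < col_sqnorm N u := incidence_col_sqnorm_gt0 _ (tl_surj u).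
have orthoM : Mh^T *m Mh = 1%:M.
  exact: normalize_cols_orthonormal (incidence_gram_diag _ _) Mpos.
have orthoN : Nh^T *m Nh = 1%:M.
  exact: normalize_cols_orthonormal (incidence_gram_diag _ _) Npos.
split; [exact: kers_sum_eigenspace | exact: kers_direct |].
rewrite (mxrank_eigenspace_N1 orthoM orthoN).
by rewrite (mxrank_normalize_cols_mul Npos Mpos).
Qed.
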